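(* Fix $m\ge 3$ and $a=(a_1,\dots,a_m),\,b=(b_1,\dots,b_m)\in S_m$. (i) Suppose there is a number $c_0=c_0(a,b)$ such that $$\widetilde\Omega^{a_1}_{i_1i_2}\widetilde\Omega^{a_2}_{i_2i_3}\cdots\widetilde\Omega^{a_m}_{i_mi_1}=e^{c_0\rho}\,\widetilde\Omega^{b_1}_{i_1i_2}\widetilde\Omega^{b_2}_{i_2i_3}\cdots\widetilde\Omega^{b_m}_{i_mi_1}\qquad(\ast)$$ for all distinct $i_1,\dots,i_m\in\{1,\dots,n\}$. Then $g_{n,m}(a)/g_{n,m}(b)=e^{c_0\rho}$. (ii) If $m$ is odd, there is no pair $(a,b)\in S_m\times S_m$ and number $c_0>0$ such that $(\ast)$ holds identically, i.e. for all distinct indices and all values of the parameters $\rho,\gamma,\alpha_1,\beta_1,\dots,\alpha_n,\beta_n$. (iii) If $m$ is even, let $N=m/2$ and let $x_1,y_1,\dots,x_N,y_N\in\{0,1\}$ satisfy $c_0:=(x_1+\dots+x_N)-(y_1+\dots+y_N)>0$. Put $$a=(1x_1,\;y_10,\;1x_2,\;y_20,\;\dots,\;1x_N,\;y_N0),\qquad b=(0x_1,\;y_11,\;0x_2,\;y_21,\;\dots,\;0x_N,\;y_N1),$$ where e.g. ''$1x_1$'' denotes the edge code whose first digit is $1$ and second digit is $x_1$. Then $(\ast)$ holds identically with this $c_0$, so that $G_{n,m}(a)=\sum_{i_1,\dots,i_m\,(\mathrm{dist})}A^{1x_1}_{i_1i_2}A^{y_10}_{i_2i_3}\cdots A^{1x_N}_{i_{m-1}i_m}A^{y_N0}_{i_mi_1}$,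 $G_{n,m}(b)=\sum_{i_1,\dots,i_m\,(\mathrm{dist})}A^{0x_1}_{i_1i_2}A^{y_11}_{i_2i_3}\cdots A^{0x_N}_{i_{m-1}i_m}A^{y_N1}_{i_mi_1}$, and $g_{n,m}(a)/g_{n,m}(b)=e^{c_0\rho}$. (iv) Conversely, for any pair $(a',b')\in S_m\times S_m$ for which $(\ast)$ holds identically with some $c_0>0$, there is a pair $(a,b)$ as in (iii) such that the generalized $m$-cycle of Type-$a'$ is isomorphic to that of Type-$a$ and the generalized $m$-cycle of Type-$b'$ is isomorphic to that of Type-$b$.
   Context: The $p_1$ model: a directed network on nodes $\{1,\dots,n\}$ has adjacency matrix $A\in\{0,1\}^{n\times n}$ with $A_{ii}=0$ ($A_{ij}=1$ iff there is a directed edge $i\to j$). The pairs $(A_{ij},A_{ji})$, $1\le i<j\le n$, are independent, and for real parameters $\rho,\gamma,\alpha_1,\beta_1,\dots,\alpha_n,\beta_n$ with $\sum_i\alpha_i=\sum_i\beta_i=0$, for $a,b\in\{0,1\}$ and $i\ne j$, $\mathbb P(A_{ij}=a,A_{ji}=b)=K_{ij}\exp\big(a(\gamma+\alpha_i+\beta_j)+b(\gamma+\alpha_j+\beta_i)+ab\rho\big)$, with $K_{ij}=[1+e^{\gamma+\alpha_i+\beta_j}+e^{\gamma+\alpha_j+\beta_i}+e^{2\gamma+\alpha_i+\beta_j+\alpha_j+\beta_i+\rho}]^{-1}$. Let $\mu_i=e^{\gamma/2+\alpha_i}$, $\nu_i=e^{\gamma/2+\beta_i}$, $\eta_i=\mu_i\nu_i$.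 Edge codes: for $i\ne j$ the edge type between $i$ and $j$ (read from $i$ to $j$) is one of $00$ (no edge), $10$ (edge $i\to j$ only), $01$ (edge $j\to i$ only), $11$ (double edge). Let $\tilde J_n$ be the all-ones $n\times n$ matrix minus the identity and $\circ$ the entrywise product; $A^{11}=A\circ A'$, $A^{00}=(\tilde J_n-A)\circ(\tilde J_n-A')$, $A^{10}=A\circ(\tilde J_n-A')$, $A^{01}=(A^{10})'$. For $i\ne j$ set $\widetilde\Omega^{00}_{ij}=1$, $\widetilde\Omega^{10}_{ij}=\mu_i\nu_j$, $\widetilde\Omega^{01}_{ij}=\mu_j\nu_i$, $\widetilde\Omega^{11}_{ij}=e^\rho\eta_i\eta_j$, and $\Omega^c_{ij}=K_{ij}\widetilde\Omega^c_{ij}$ for $c\in\{00,10,01,11\}$ (so $\Omega^c_{ij}=\mathbb P(A^c_{ij}=1)$). $S_m$ is the set of $a=(a_1,\dots,a_m)$ with each $a_k\in\{00,10,01,11\}$. A generalized $m$-cycle of Type-$a$ consists of $m$ distinct nodes $i_1,\dots,i_m$ such that the edge type between $i_k$ and $i_{k+1}$ (with $i_{m+1}=i_1$), read from $i_k$ to $i_{k+1}$, is $a_k$; two such cycles are isomorphic if the corresponding directed graphs on $m$ vertices are isomorphic. Define $G_{n,m}(a)=\sum_{i_1,\dots,i_m\,(\mathrm{dist})}A^{a_1}_{i_1i_2}A^{a_2}_{i_2i_3}\cdots A^{a_m}_{i_mi_1}$ (sum over distinct indices) and $g_{n,m}(a)=\mathbb E[G_{n,m}(a)]=\sum_{i_1,\dots,i_m\,(\mathrm{dist})}\Omega^{a_1}_{i_1i_2}\cdots\Omega^{a_m}_{i_mi_1}$.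 *)

From mathcomp Require Import all_boot all_order all_algebra.
From mathcomp Require Import all_classical all_reals all_analysis.
Set Implicit Arguments. Unset Strict Implicit. Unset Printing Implicit Defensive.
Import Order.TTheory GRing.Theory Num.Theory.
Local Open Scope ring_scope.

(* Edge ecode between i and j read from i to j: (d1, d2) with
   d1 = [A_ij = 1], d2 = [A_ji = 1].  So 00 = (false,false), 10 = (true,false),
   01 = (false,true), 11 = (true,true). *)
Definition ecode := (bool * bool)%type.

Section P1.
Variable R : realType.
Variable n : nat.
Variables (rho gamma : R) (alpha beta : 'I_n -> R).

Definition mu (i : 'I_n) : R := expR (gamma / 2 + alpha i).
Definition nu (i : 'I_n) : R := expR (gamma / 2 + beta i).
Definition eta (i : 'I_n) : R := mu i * nu i.

Definition Omt (c : ecode) (i j : 'I_n) : R :=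
  match c with
  | (false, false) => 1
  | (true, false) => mu i * nu j
  | (false, true) => mu j * nu i
  | (true, true) => expR rho * eta i * eta j
  end.

Definition Kp (i j : 'I_n) : R :=
  (1 + expR (gamma + alpha i + beta j) + expR (gamma + alpha j + beta i)
     + expR (2 * gamma + alpha i + beta j + alpha j + beta i + rho))^-1.

Definition Om (c : ecode) (i j : 'I_n) : R := Kp i j * Omt c i j.

End P1.

(* product along the cycle i_1 -> i_2 -> ... -> i_m -> i_1, where the
   indices are f 0, ..., f (m-1) and ordS is the cyclic successor in 'I_m *)
Definition cprod (R : realType) (n m : nat) (F : ecode -> 'I_n -> 'I_n -> R)
  (a : 'I_m -> ecode) (f : 'I_m -> 'I_n) : R :=
  \prod_(k < m) F (a k) (f k) (f (ordS k)).

Definition gnm (R : realType) (n m : nat) (rho gamma : R) (alpha beta : 'I_n -> R)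
  (a : 'I_m -> ecode) : R :=
  \sum_(f : {ffun 'I_m -> 'I_n} | injectiveb f)
     cprod (Om rho gamma alpha beta) a f.

Definition star_holds (R : realType) (n m : nat) (rho gamma : R)
  (alpha beta : 'I_n -> R) (a b : 'I_m -> ecode) (c0 : R) : Prop :=
  forall f : 'I_m -> 'I_n, injective f ->
    cprod (Omt rho gamma alpha beta) a f
    = expR (c0 * rho) * cprod (Omt rho gamma alpha beta) b f.

Definition identically (R : realType) (n m : nat) (a b : 'I_m -> ecode) (c0 : R)
  : Prop :=
  forall (rho gamma : R) (alpha beta : 'I_n -> R),
    \sum_i alpha i = 0 -> \sum_i beta i = 0 ->
    star_holds rho gamma alpha beta a b c0.

(* directed graph on the m cycle vertices of a generalized m-cycle of Type-a:
   u -> v is an edge iff (v = u+1 and first digit of a_u is 1) or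
   (u = v+1 and second digit of a_v is 1) *)
Definition cycle_rel (m : nat) (a : 'I_m -> ecode) (u v : 'I_m) : bool :=
  ((v == ordS u) && (a u).1) || ((u == ordS v) && (a v).2).

Definition cycle_iso (m1 m2 : nat) (a : 'I_m1 -> ecode) (b : 'I_m2 -> ecode) : Prop :=
  exists p : 'I_m1 -> 'I_m2, bijective p /\
    forall u v, cycle_rel a u v = cycle_rel b (p u) (p v).

Definition a_iii (N : nat) (x y : N.-tuple bool) : 'I_(N.*2) -> ecode :=
  fun k => if odd k then (nth false y k./2, false) else (true, nth false x k./2).
Definition b_iii (N : nat) (x y : N.-tuple bool) : 'I_(N.*2) -> ecode :=
  fun k => if odd k then (nth false y k./2, true) else (false, nth false x k./2).
Definition c0_iii (R : realType) (N : nat) (x y : N.-tuple bool) : R :=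
  (count id x)%:R - (count id y)%:R.

(* With s_i = gamma/2 + alpha_i and t_i = gamma/2 + beta_i, the product of the
   tilde-Omega's around a Type-a cycle is
     exp (rho * #(double edges of a)
          + sum_v (outdeg_a v * s_(i_v) + indeg_a v * t_(i_v))).
   So (i) is immediate (the normalising factors K_ij do not depend on the edge
   type), and (star) holds identically iff both cycles have the same out- and
   in-degree at every vertex and c0 is the difference of their numbers of
   double edges.  Matching degrees at a vertex forces the digitwise difference
   (p, q) of the codes of its outgoing edge to be (-q', -p') where (p', q') is
   that of its incoming edge.  Along the orbits of this involution the numbers
   of double edges agree, except on the alternating orbit {(1,0), (0,-1)} and
   its mirror image; this forces m to be even and, up to rotation and
   reflection, the shape (iii). *)

From mathcomp Require Import all_boot all_order all_algebra.
From mathcomp Require Import all_classical all_reals all_analysis.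
From mathcomp Require Import zify ring.
Import Order.TTheory GRing.Theory Num.Theory.
Set Implicit Arguments. Unset Strict Implicit. Unset Printing Implicit Defensive.

Lemma ordS_rev_ord m (k : 'I_m) : ordS (rev_ord (ordS k)) = rev_ord k.
Proof.
apply: val_inj; case: k => k lt_km /=.
have [lt_k1m | ge_k1m] := ltnP k.+1 m.
  by rewrite (modn_small lt_k1m) modn_small; lia.
have -> : k.+1 = m by lia.
by rewrite modnn subn1 prednK ?modnn ?subnn //; lia.
Qed.

Definition ord_mod m (m_gt0 : (0 < m)%N) (j : nat) : 'I_m :=
  Ordinal (ltn_pmod j m_gt0).

Section OrdMod.
Variables (m : nat) (m_gt0 : (0 < m)%N).

Lemma ord_modS j : ord_mod m_gt0 j.+1 = ordS (ord_mod m_gt0 j).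
Proof. by apply: val_inj; rewrite /= -[(j %% m).+1]addn1 modnDml addn1. Qed.

Lemma ord_mod_ord (k : 'I_m) : ord_mod m_gt0 k = k.
Proof. by apply: val_inj; rewrite /= modn_small. Qed.

Lemma ord_mod_self : ord_mod m_gt0 m = ord_mod m_gt0 0.
Proof. by apply: val_inj; rewrite /= modnn mod0n. Qed.

End OrdMod.

Lemma odd_ordS N (k : 'I_N.*2) : odd (ordS k) = ~~ odd k.
Proof.
rewrite /=; have [lt_k1 | ge_k1] := ltnP k.+1 N.*2; first by rewrite modn_small.
have k1E : k.+1 = N.*2 by apply/eqP; rewrite eqn_leq ge_k1 ltn_ord.
by rewrite k1E modnn /=; have := congr1 odd k1E; rewrite odd_double /= => ->.
Qed.

Lemma sum_double_range N (F : nat -> nat) :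
  (\sum_(k < N.*2) F k = \sum_(i < N) (F i.*2 + F i.*2.+1))%N.
Proof.
elim: N => [|N IH]; first by rewrite !big_ord0.
by rewrite doubleS !big_ord_recr /= IH addnA.
Qed.

Lemma count_id_sum_nth (s : seq bool) :
  count id s = (\sum_(i < size s) nth false s i)%N.
Proof.
elim: s => [|c s IH]; first by rewrite big_ord0.
by rewrite /= big_ord_recl IH.
Qed.

Definition flip (c : ecode) : ecode := (c.2, c.1).
Definition is_double (c : ecode) : nat := c.1 && c.2.
Definition ndouble m (a : 'I_m -> ecode) : nat := (\sum_(k < m) is_double (a k))%N.

(* [degree_match ca cb ca' cb'] says that the middle vertex of two consecutive
   edges, coded [ca] then [ca'] in one cycle and [cb] then [cb'] in the other,
   has the same out- and in-degree in both cycles. *)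
Definition degree_match (ca cb ca' cb' : ecode) : bool :=
  (ca'.1 + ca.2 == cb'.1 + cb.2)%N && (ca'.2 + ca.1 == cb'.2 + cb.1)%N.

Definition same_degrees m (a b : 'I_m -> ecode) : Prop :=
  forall k, degree_match (a k) (b k) (a (ordS k)) (b (ordS k)).

(* Writing (p, q) for the digitwise difference of [ca] and [cb], a degree
   match forces (p', q') = (-q, -p) on the next edge.  The orbits of this map
   are {(1,0), (0,-1)} (lead and trail pairs), its mirror image, the fixed
   points p + q = 0, and {(1,1), (-1,-1)}. *)
Definition lead_pair (ca cb : ecode) : bool := [&& ca.1, ~~ cb.1 & ca.2 == cb.2].
Definition trail_pair (ca cb : ecode) : bool := [&& ~~ ca.2, cb.2 & ca.1 == cb.1].
Definition forward_pair (ca cb : ecode) : bool := lead_pair ca cb || trail_pair ca cb.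
Definition backward_pair (ca cb : ecode) : bool := forward_pair (flip ca) (flip cb).
Definition equal_weight_pair (ca cb : ecode) : bool := (ca.1 + ca.2 == cb.1 + cb.2)%N.
Definition opposite_pair (ca cb : ecode) : bool :=
  (ca == (true, true)) && (cb == (false, false))
  || (ca == (false, false)) && (cb == (true, true)).

Lemma pair_classes ca cb :
  [|| forward_pair ca cb, backward_pair ca cb, equal_weight_pair ca cb
    | opposite_pair ca cb].
Proof. by move: ca cb => [[] []] [[] []]. Qed.

Section PairSteps.
Variables ca cb ca' cb' : ecode.
Hypothesis match_c : degree_match ca cb ca' cb'.

Lemma lead_pair_step : lead_pair ca cb -> trail_pair ca' cb'.
Proof. by move: ca cb ca' cb' match_c => [[] []] [[] []] [[] []] [[] []]. Qed.

Lemma trail_pair_step : trail_pair ca cb -> lead_pair ca' cb'.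
Proof. by move: ca cb ca' cb' match_c => [[] []] [[] []] [[] []] [[] []]. Qed.

Lemma backward_pair_step : backward_pair ca cb -> backward_pair ca' cb'.
Proof. by move: ca cb ca' cb' match_c => [[] []] [[] []] [[] []] [[] []]. Qed.

Lemma equal_weight_pair_step : equal_weight_pair ca cb -> equal_weight_pair ca' cb'.
Proof. by move: ca cb ca' cb' match_c => [[] []] [[] []] [[] []] [[] []]. Qed.

Lemma opposite_pair_step : opposite_pair ca cb -> opposite_pair ca' cb'.
Proof. by move: ca cb ca' cb' match_c => [[] []] [[] []] [[] []] [[] []]. Qed.

Lemma opposite_pair_double : opposite_pair ca cb -> is_double ca' = is_double cb.
Proof. by move: ca cb ca' cb' match_c => [[] []] [[] []] [[] []] [[] []]. Qed.

Lemma degree_match_flip : degree_match (flip ca') (flip cb') (flip ca) (flip cb).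
Proof. by move: ca cb ca' cb' match_c => [[] []] [[] []] [[] []] [[] []]. Qed.

End PairSteps.

Lemma lead_trail_pair ca cb : lead_pair ca cb -> trail_pair ca cb -> False.
Proof. by move: ca cb => [[] []] [[] []]. Qed.

Lemma lead_pairE ca cb : lead_pair ca cb -> ca = (true, ca.2) /\ cb = (false, ca.2).
Proof. by move: ca cb => [[] []] [[] []]. Qed.

Lemma trail_pairE ca cb : trail_pair ca cb -> ca = (ca.1, false) /\ cb = (ca.1, true).
Proof. by move: ca cb => [[] []] [[] []]. Qed.

Lemma equal_weight_pair_double ca cb :
  equal_weight_pair ca cb -> is_double ca = is_double cb.
Proof. by move: ca cb => [[] []] [[] []]. Qed.

Lemma is_double_flip c : is_double (flip c) = is_double c.
Proof. by case: c => [[] []]. Qed.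

Lemma same_degrees_invariant m (m_gt0 : (0 < m)%N) (a b : 'I_m -> ecode)
    (P : ecode -> ecode -> bool) :
  (forall ca cb ca' cb', degree_match ca cb ca' cb' -> P ca cb -> P ca' cb') ->
  same_degrees a b -> P (a (ord_mod m_gt0 0)) (b (ord_mod m_gt0 0)) ->
  forall k, P (a k) (b k).
Proof.
move=> P_step deg_ab P0 k; rewrite -(ord_mod_ord m_gt0 k).
by elim: (val k) => // j IH; rewrite ord_modS; apply: P_step (deg_ab _) IH.
Qed.

Definition rot_cycle m (a : 'I_m -> ecode) : 'I_m -> ecode := fun k => a (ordS k).
Definition rev_cycle m (a : 'I_m -> ecode) : 'I_m -> ecode :=
  fun k => flip (a (rev_ord (ordS k))).

Lemma rev_ordS_inj m : injective (fun k : 'I_m => rev_ord (ordS k)).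
Proof. by move=> u v /rev_ord_inj /ordS_inj. Qed.

Section CycleIso.
Variable m : nat.
Implicit Types a b : 'I_m -> ecode.

Lemma cycle_iso_trans m' m'' a (b : 'I_m' -> ecode) (c : 'I_m'' -> ecode) :
  cycle_iso a b -> cycle_iso b c -> cycle_iso a c.
Proof.
move=> [p [bij_p Ep]] [q [bij_q Eq]]; exists (q \o p).
by split; [exact: bij_comp | move=> u v; rewrite Ep Eq].
Qed.

Lemma eq_cycle_iso a b : a =1 b -> cycle_iso a b.
Proof.
move=> eq_ab; exists id; split; first exact: (Bijective (g := id)).
by move=> u v; rewrite /cycle_rel !eq_ab.
Qed.

Lemma cycle_iso_rot a : cycle_iso a (rot_cycle a).
Proof.
exists (@ord_pred m); split; first exact: ord_pred_bij.
move=> u v; rewrite /cycle_rel /rot_cycle !ord_predK.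
by rewrite -(inj_eq (@ordS_inj m) (ord_pred v)) -(inj_eq (@ordS_inj m) (ord_pred u))
  !ord_predK.
Qed.

Lemma cycle_iso_rev a : cycle_iso a (rev_cycle a).
Proof.
exists (@rev_ord m); split; first by exists (@rev_ord m); apply: rev_ordK.
have succ_rev (u v : 'I_m) : (rev_ord v == ordS (rev_ord u)) = (u == ordS v).
  rewrite -[u]ord_predK ordS_rev_ord (inj_eq rev_ord_inj) (inj_eq (@ordS_inj _)).
  exact: eq_sym.
move=> u v; rewrite /cycle_rel /rev_cycle !succ_rev orbC.
by congr orb; case: eqP => // ->; rewrite ordS_rev_ord rev_ordK.
Qed.

Lemma same_degrees_rot a b :
  same_degrees a b -> same_degrees (rot_cycle a) (rot_cycle b).
Proof. by move=> deg_ab k; apply: deg_ab. Qed.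

Lemma same_degrees_rev a b :
  same_degrees a b -> same_degrees (rev_cycle a) (rev_cycle b).
Proof.
by move=> deg_ab k; rewrite /rev_cycle -(ordS_rev_ord (ordS k)); apply: degree_match_flip.
Qed.

Lemma ndouble_rot a : ndouble (rot_cycle a) = ndouble a.
Proof. by rewrite /ndouble [RHS](reindex_inj (@ordS_inj m)). Qed.

Lemma ndouble_rev a : ndouble (rev_cycle a) = ndouble a.
Proof.
rewrite /ndouble [RHS](reindex_inj (@rev_ordS_inj m)).
by apply: eq_bigr => k _; apply: is_double_flip.
Qed.

End CycleIso.

Definition iii_form m (a b : 'I_m -> ecode) : Prop :=
  exists N (x y : N.-tuple bool),
    [/\ m = N.*2, (count id y < count id x)%N,
        cycle_iso a (a_iii x y) & cycle_iso b (b_iii x y)].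

Lemma iii_form_iso m (a b a' b' : 'I_m -> ecode) :
  cycle_iso a a' -> cycle_iso b b' -> iii_form a' b' -> iii_form a b.
Proof.
move=> iso_a iso_b [N [x [y [mE lt_xy iso_a' iso_b']]]].
by exists N, x, y; split => //; apply: cycle_iso_trans; eassumption.
Qed.

Lemma ndouble_iii N (x y : N.-tuple bool) :
  ndouble (a_iii x y) = count id x /\ ndouble (b_iii x y) = count id y.
Proof.
rewrite !count_id_sum_nth !size_tuple; split.
  apply: (etrans (sum_double_range N (fun k =>
    is_double (if odd k then (nth false y k./2, false) else (true, nth false x k./2))))).
  by apply: eq_bigr => i _; rewrite /= odd_double doubleK uphalf_double /is_double
    andbF addn0.
apply: (etrans (sum_double_range N (fun k =>
  is_double (if odd k then (nth false y k./2, true) else (false, nth false x k./2))))).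
by apply: eq_bigr => i _; rewrite /= odd_double doubleK uphalf_double /is_double andbT.
Qed.

Lemma lead_pair_iii_form m (m_gt0 : (0 < m)%N) (a b : 'I_m -> ecode) :
  same_degrees a b -> (ndouble b < ndouble a)%N ->
  lead_pair (a (ord_mod m_gt0 0)) (b (ord_mod m_gt0 0)) -> iii_form a b.
Proof.
move=> deg_ab lt_ab lead0.
pose alt (j : nat) := if odd j then trail_pair else lead_pair.
have alt_mod j : alt j (a (ord_mod m_gt0 j)) (b (ord_mod m_gt0 j)).
  elim: j => // j; rewrite /alt ord_modS /=.
  by case: (odd j) => /= [/trail_pair_step | /lead_pair_step]; apply.
have even_m : ~~ odd m.
  apply/negP=> odd_m; have := alt_mod m; rewrite /alt odd_m ord_mod_self.
  exact: lead_trail_pair.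
have [N mE] : exists N, m = N.*2.
  by exists m./2; move: (odd_double_half m); rewrite (negbTE even_m).
subst m; set pos := ord_mod m_gt0.
have pos_half (k : 'I_N.*2) : pos (odd k + (k./2).*2) = k.
  by rewrite odd_double_half /pos ord_mod_ord.
pose x := [tuple (a (pos i.*2)).2 | i < N].
pose y := [tuple (a (pos i.*2.+1)).1 | i < N].
have half_lt (k : 'I_N.*2) : (k./2 < N)%N.
  by rewrite -ltn_double; move: (odd_double_half k) (ltn_ord k); lia.
have ab_iii (k : 'I_N.*2) : a k = a_iii x y k /\ b k = b_iii x y k.
  have := alt_mod k; rewrite ord_mod_ord /alt /a_iii /b_iii.
  rewrite -[nth _ x _]/(nth false x (Ordinal (half_lt k))) nth_mktuple.
  rewrite -[nth _ y _]/(nth false y (Ordinal (half_lt k))) nth_mktuple /=.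
  case: ifP => odd_k.
    have -> : pos (k./2).*2.+1 = k by rewrite -[RHS](pos_half k) odd_k.
    exact: trail_pairE.
  have -> : pos (k./2).*2 = k by rewrite -[RHS](pos_half k) odd_k.
  exact: lead_pairE.
have [nd_a nd_b] := ndouble_iii x y.
have nd_ab : ndouble a = count id x /\ ndouble b = count id y.
  rewrite -nd_a -nd_b; split; apply: eq_bigr => k _.
    by rewrite (ab_iii k).1.
  by rewrite (ab_iii k).2.
exists N, x, y; rewrite -nd_ab.1 -nd_ab.2.
by split=> //; apply: eq_cycle_iso => k; case: (ab_iii k).
Qed.

Lemma forward_pair_iii_form m (m_gt0 : (0 < m)%N) (a b : 'I_m -> ecode) :
  same_degrees a b -> (ndouble b < ndouble a)%N ->
  forward_pair (a (ord_mod m_gt0 0)) (b (ord_mod m_gt0 0)) -> iii_form a b.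
Proof.
move=> deg_ab lt_ab /orP[lead0 | trail0]; first exact: lead_pair_iii_form lead0.
apply: iii_form_iso (cycle_iso_rot a) (cycle_iso_rot b) _.
apply: (lead_pair_iii_form (m_gt0 := m_gt0)); first exact: same_degrees_rot.
  by rewrite !ndouble_rot.
exact: trail_pair_step (deg_ab _) trail0.
Qed.

Lemma same_degrees_iii_form m (a b : 'I_m -> ecode) :
  (0 < m)%N -> same_degrees a b -> (ndouble b < ndouble a)%N -> iii_form a b.
Proof.
move=> m_gt0 deg_ab lt_ab; set z := ord_mod m_gt0 0.
have class_everywhere P := @same_degrees_invariant m m_gt0 a b P.
case/or4P: (pair_classes (a z) (b z)) => [fwd | bwd | eqw | opp].
- exact: forward_pair_iii_form fwd.
- have bwd_all := class_everywhere _ backward_pair_step deg_ab bwd.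
  apply: iii_form_iso (cycle_iso_rev a) (cycle_iso_rev b) _.
  apply: (forward_pair_iii_form (m_gt0 := m_gt0)); first exact: same_degrees_rev.
    by rewrite !ndouble_rev.
  exact: bwd_all.
- have eqw_all := class_everywhere _ equal_weight_pair_step deg_ab eqw.
  suff nd_eq : ndouble a = ndouble b by rewrite nd_eq ltnn in lt_ab.
  by apply: eq_bigr => k _; apply: equal_weight_pair_double.
- have opp_all := class_everywhere _ opposite_pair_step deg_ab opp.
  suff nd_eq : ndouble a = ndouble b by rewrite nd_eq ltnn in lt_ab.
  rewrite -ndouble_rot; apply: eq_bigr => k _.
  exact: opposite_pair_double (deg_ab k) (opp_all k).
Qed.

Local Open Scope ring_scope.

(* Degrees of the vertex [ordS k], the head of edge [k], not of vertex [k]. *)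
Definition outdeg m (a : 'I_m -> ecode) (k : 'I_m) : nat := ((a (ordS k)).1 + (a k).2)%N.
Definition indeg m (a : 'I_m -> ecode) (k : 'I_m) : nat := ((a (ordS k)).2 + (a k).1)%N.

Lemma sum_outdeg_indeg m (a : 'I_m -> ecode) :
  (\sum_(k < m) outdeg a k = \sum_(k < m) indeg a k)%N.
Proof.
have rot (F : ecode -> nat) : (\sum_(k < m) F (a (ordS k)) = \sum_(k < m) F (a k))%N.
  by rewrite [RHS](reindex_inj (@ordS_inj m)).
by rewrite !big_split /= (rot (fun c => c.1 : nat)) (rot (fun c => c.2 : nat)) addnC.
Qed.

Lemma eq_degrees_of_mixed_sums m (oa ia ob ib : 'I_m -> nat) : (0 < m)%N ->
  (forall k0 k1, oa k0 + ia k1 = ob k0 + ib k1)%N ->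
  (\sum_(k < m) oa k = \sum_(k < m) ia k)%N ->
  (\sum_(k < m) ob k = \sum_(k < m) ib k)%N ->
  forall k, oa k = ob k /\ ia k = ib k.
Proof.
move=> m_gt0 mixed sum_a sum_b.
have sum_o : (\sum_(k < m) oa k = \sum_(k < m) ob k)%N.
  have : (\sum_(k < m) (oa k + ia k) = \sum_(k < m) (ob k + ib k))%N.
    by apply: eq_bigr => k _; apply: mixed.
  by rewrite !big_split /= -sum_a -sum_b !addnn => /double_inj.
have ia_ib k : ia k = ib k.
  have : (\sum_(k0 < m) (oa k0 + ia k) = \sum_(k0 < m) (ob k0 + ib k))%N.
    by apply: eq_bigr => k0 _; apply: mixed.
  rewrite !big_split /= sum_o !sum_nat_const card_ord => /addnI /eqP.
  by rewrite eqn_pmul2l // => /eqP.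
by move=> k; split => //; apply: (@addIn (ia k)); rewrite mixed ia_ib.
Qed.

Section Analytic.
Variable R : realType.
Implicit Types (rho gamma : R) (n m : nat).

Lemma Omt_expR n rho gamma (alpha beta : 'I_n -> R) c i j :
  Omt rho gamma alpha beta c i j =
  expR (rho * (is_double c)%:R
        + (c.1 : nat)%:R * ((gamma / 2 + alpha i) + (gamma / 2 + beta j))
        + (c.2 : nat)%:R * ((gamma / 2 + alpha j) + (gamma / 2 + beta i))).
Proof.
by case: c => [[] []]; rewrite /Omt /eta /mu /nu /is_double /= ?mul1r ?mul0r
  ?mulr1 ?mulr0 ?addr0 ?add0r ?expR0 ?expRD //; ring.
Qed.

Definition degree_sum n m gamma (alpha beta : 'I_n -> R) (a : 'I_m -> ecode)
    (f : 'I_m -> 'I_n) : R :=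
  \sum_(k < m) ((outdeg a k)%:R * (gamma / 2 + alpha (f (ordS k)))
                + (indeg a k)%:R * (gamma / 2 + beta (f (ordS k)))).

Lemma cprod_Omt n m rho gamma (alpha beta : 'I_n -> R) (a : 'I_m -> ecode)
    (f : 'I_m -> 'I_n) :
  cprod (Omt rho gamma alpha beta) a f
  = expR (rho * (ndouble a)%:R + degree_sum gamma alpha beta a f).
Proof.
rewrite /cprod; under eq_bigr do rewrite Omt_expR.
rewrite -expR_sum; congr expR.
set s := fun i => gamma / 2 + alpha i; set t := fun i => gamma / 2 + beta i.
have rot (F : 'I_m -> R) : \sum_(k < m) F k = \sum_(k < m) F (ordS k).
  exact: (reindex_inj (@ordS_inj m)).
rewrite /degree_sum /ndouble natr_sum mulr_sumr -big_split /=.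
rewrite (eq_bigr (fun k => rho * (is_double (a k))%:R
   + (((a k).1 : nat)%:R * s (f k) + ((a k).2 : nat)%:R * t (f k))
   + (((a k).1 : nat)%:R * t (f (ordS k)) + ((a k).2 : nat)%:R * s (f (ordS k)))));
  last by move=> k _; rewrite /s /t; ring.
(* Shifting the tail terms of each edge by one attaches them to its head. *)
rewrite !big_split /= (rot (fun k => ((a k).1 : nat)%:R * s (f k)))
  (rot (fun k => ((a k).2 : nat)%:R * t (f k))).
rewrite [X in _ = _ + (X + _)](eq_bigr (fun k =>
    ((a (ordS k)).1 : nat)%:R * s (f (ordS k)) + ((a k).2 : nat)%:R * s (f (ordS k))));
  last by move=> k _; rewrite /outdeg natrD mulrDl.
rewrite [X in _ = _ + (_ + X)](eq_bigr (fun k =>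
    ((a (ordS k)).2 : nat)%:R * t (f (ordS k)) + ((a k).1 : nat)%:R * t (f (ordS k))));
  last by move=> k _; rewrite /indeg natrD mulrDl.
by rewrite !big_split /=; ring.
Qed.

Lemma cprod_Om_gt0 n m rho gamma (alpha beta : 'I_n -> R) (a : 'I_m -> ecode)
    (f : 'I_m -> 'I_n) :
  0 < cprod (Om rho gamma alpha beta) a f.
Proof.
apply: prodr_gt0 => k _; rewrite /Om Omt_expR mulr_gt0 ?expR_gt0 //.
by rewrite invr_gt0 !addr_gt0 ?expR_gt0.
Qed.

Lemma cprod_Om n m rho gamma (alpha beta : 'I_n -> R) (a : 'I_m -> ecode)
    (f : 'I_m -> 'I_n) :
  cprod (Om rho gamma alpha beta) a f
  = (\prod_(k < m) Kp rho gamma alpha beta (f k) (f (ordS k)))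
    * cprod (Omt rho gamma alpha beta) a f.
Proof. by rewrite /cprod -big_split. Qed.

Lemma gnm_ratio n m rho gamma (alpha beta : 'I_n -> R) (a b : 'I_m -> ecode) (c0 : R) :
  (m <= n)%N -> star_holds rho gamma alpha beta a b c0 ->
  gnm rho gamma alpha beta a / gnm rho gamma alpha beta b = expR (c0 * rho).
Proof.
move=> le_mn star_ab.
have -> : gnm rho gamma alpha beta a = expR (c0 * rho) * gnm rho gamma alpha beta b.
  rewrite /gnm mulr_sumr; apply: eq_bigr => f /injectiveP inj_f.
  by rewrite !cprod_Om (star_ab _ inj_f) mulrCA.
have inj_widen : injectiveb [ffun k => widen_ord le_mn k].
  by apply/injectiveP => u v; rewrite !ffunE => /(congr1 val) /= /val_inj.
suff gnm_b_gt0 : 0 < gnm rho gamma alpha beta b by rewrite mulfK ?gt_eqF.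
rewrite /gnm (bigD1 _ inj_widen) /= ltr_wpDr ?cprod_Om_gt0 //.
by apply: sumr_ge0 => f _; apply/ltW/cprod_Om_gt0.
Qed.

Section Identically.
Variables (n m : nat) (le_mn : (m <= n)%N) (a b : 'I_m -> ecode) (c0 : R).
Hypothesis ident_ab : identically n a b c0.

Let w (k : 'I_m) : 'I_n := widen_ord le_mn k.
Let w_inj : injective w. Proof. by move=> u v /(congr1 val) /= /val_inj. Qed.

Lemma identically_exponent rho gamma (alpha beta : 'I_n -> R) :
  \sum_i alpha i = 0 -> \sum_i beta i = 0 ->
  rho * (ndouble a)%:R + degree_sum gamma alpha beta a w
  = c0 * rho + (rho * (ndouble b)%:R + degree_sum gamma alpha beta b w).
Proof.
move=> sum_alpha sum_beta; apply: expR_inj; rewrite [in RHS]expRD -!cprod_Omt.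
exact: ident_ab.
Qed.

Lemma identically_c0 : c0 = (ndouble a)%:R - (ndouble b)%:R.
Proof.
have sum0 : \sum_(i < n) (fun=> 0 : R) i = 0 by rewrite big1.
have := identically_exponent 1 0 sum0 sum0.
have deg0 (d : 'I_m -> ecode) : degree_sum 0 (fun=> 0) (fun=> 0) d w = 0.
  by rewrite /degree_sum big1 // => k _; rewrite mul0r addr0 !mulr0 addr0.
by rewrite !deg0 !addr0 !mul1r mulr1 => ->; rewrite addrK.
Qed.

(* With [gamma = 2/n] and [alpha], [beta] the centred indicators of the images
   of two vertices, the exponent reads off one out-degree plus one in-degree. *)
Lemma identically_same_degrees : (0 < m)%N -> same_degrees a b.
Proof.
move=> m_gt0.
have n_neq0 : (n%:R : R) != 0 by rewrite pnatr_eq0 -lt0n (leq_trans m_gt0).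
pose centred (U : 'I_n) (i : 'I_n) : R := (i == U)%:R - n%:R^-1.
have sum_centred U : \sum_i centred U i = 0.
  rewrite sumrB sumr_const card_ord -[_ *+ n]mulr_natr mulVf // (bigD1 U) //=.
  by rewrite eqxx big1 ?addr0 ?subrr // => i /negbTE ->.
have half_centred U i : 2 * n%:R^-1 / 2 + centred U i = (i == U)%:R.
  by rewrite mulrAC divff ?pnatr_eq0 // mul1r addrC subrK.
have pick (F : 'I_m -> R) j : \sum_(k < m) F k * (w (ordS k) == w (ordS j))%:R = F j.
  rewrite (bigD1 j) //= eqxx mulr1 big1 ?addr0 // => k.
  by rewrite (inj_eq w_inj) (inj_eq (@ordS_inj m)) => /negbTE ->; rewrite mulr0.
have mixed k0 k1 : (outdeg a k0 + indeg a k1 = outdeg b k0 + indeg b k1)%N.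
  have := identically_exponent 0 (2 * n%:R^-1)
    (sum_centred (w (ordS k0))) (sum_centred (w (ordS k1))).
  have deg_pick (d : 'I_m -> ecode) : degree_sum (2 * n%:R^-1) (centred (w (ordS k0)))
      (centred (w (ordS k1))) d w = (outdeg d k0 + indeg d k1)%:R.
    rewrite /degree_sum; under eq_bigr do rewrite !half_centred.
    by rewrite big_split /= !pick natrD.
  by rewrite !deg_pick !mul0r !mulr0 !add0r => /eqP; rewrite eqr_nat => /eqP.
have deg_eq := @eq_degrees_of_mixed_sums m (outdeg a) (indeg a) (outdeg b) (indeg b)
  m_gt0 mixed (sum_outdeg_indeg a) (sum_outdeg_indeg b).
move=> k; have [] := deg_eq k.
by rewrite /degree_match /outdeg /indeg => -> ->; rewrite !eqxx.
Qed.

End Identically.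

Lemma iii_identically N (x y : N.-tuple bool) n :
  identically n (a_iii x y) (b_iii x y) (c0_iii R x y).
Proof.
move=> rho gamma alpha beta _ _ f _; rewrite !cprod_Omt -expRD; congr expR.
have -> : degree_sum gamma alpha beta (a_iii x y) f
          = degree_sum gamma alpha beta (b_iii x y) f.
  by apply: eq_bigr => k _; rewrite /outdeg /indeg /a_iii /b_iii odd_ordS; case: (odd k).
have [nd_a nd_b] := ndouble_iii x y.
by rewrite nd_a nd_b /c0_iii; ring.
Qed.

End Analytic.

Lemma identically_iii_form (R : realType) n m (a b : 'I_m -> ecode) (c0 : R) :
  (0 < m)%N -> (m <= n)%N -> 0 < c0 -> identically n a b c0 -> iii_form a b.
Proof.
move=> m_gt0 le_mn c0_gt0 ident_ab.
apply: same_degrees_iii_form m_gt0 (identically_same_degrees le_mn ident_ab m_gt0) _.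
by rewrite -(ltr_nat R) -subr_gt0 -(identically_c0 le_mn ident_ab).
Qed.

Unset Implicit Arguments.
Theorem lemma1 (R : realType) :
  (* (i) *)
  (forall m : nat, (3 <= m)%N ->
   forall n : nat, (m <= n)%N ->
   forall (rho gamma : R) (alpha beta : 'I_n -> R),
     \sum_i alpha i = 0 -> \sum_i beta i = 0 ->
   forall (a b : 'I_m -> ecode) (c0 : R),
     star_holds rho gamma alpha beta a b c0 ->
     gnm rho gamma alpha beta a / gnm rho gamma alpha beta b = expR (c0 * rho))
  /\
  (* (ii) *)
  (forall m : nat, (3 <= m)%N -> odd m ->
   forall n : nat, (m <= n)%N ->
   ~ (exists (a b : 'I_m -> ecode) (c0 : R), 0 < c0 /\ identically n a b c0))
  /\
  (* (iii) *)
  (forall N : nat, (3 <= N.*2)%N ->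
   forall x y : N.-tuple bool, (count id y < count id x)%N ->
     (forall n : nat, identically n (a_iii x y) (b_iii x y) (c0_iii R x y))
     /\
     (forall n : nat, (N.*2 <= n)%N ->
      forall (rho gamma : R) (alpha beta : 'I_n -> R),
        \sum_i alpha i = 0 -> \sum_i beta i = 0 ->
        gnm rho gamma alpha beta (a_iii x y) / gnm rho gamma alpha beta (b_iii x y)
        = expR (c0_iii R x y * rho)))
  /\
  (* (iv) *)
  (forall m : nat, (3 <= m)%N ->
   forall n : nat, (m <= n)%N ->
   forall (a' b' : 'I_m -> ecode) (c0 : R), 0 < c0 -> identically n a' b' c0 ->
   exists (N : nat) (x y : N.-tuple bool),
     [/\ m = N.*2, (count id y < count id x)%N,
         cycle_iso a' (a_iii x y) & cycle_iso b' (b_iii x y)]).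
Proof.
split; [|split; [|split]].
- by move=> m _ n le_mn rho gamma alpha beta _ _ a b c0; apply: gnm_ratio.
- move=> m m_ge3 odd_m n le_mn [a [b [c0 [c0_gt0 ident_ab]]]].
  have [N [x [y [mE _ _ _]]]] :=
    identically_iii_form (ltnW (ltnW m_ge3)) le_mn c0_gt0 ident_ab.
  by rewrite mE odd_double in odd_m.
- move=> N _ x y _; split=> [n | n le_Nn rho gamma alpha beta sum_alpha sum_beta].
    exact: iii_identically.
  exact: gnm_ratio le_Nn (iii_identically x y rho gamma sum_alpha sum_beta).
- move=> m m_ge3 n le_mn a' b' c0 c0_gt0.
  exact: identically_iii_form (ltnW (ltnW m_ge3)) le_mn c0_gt0.
Qed.
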